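(* Let $\mathfrak g$ and the infinite quiver $Q(\mathfrak g)$ be as in the context, and let $\mathbb C(\mathbf X)$ be the field of rational functions in the $X$-variables $X^i_n$ of $Q(\mathfrak g)$ with Poisson bracket $\{X_u,X_v\}=\varepsilon_{uv}X_uX_v$. Let $\mathbb C(a)$ be the field of rational functions in variables $a_i(n)$, $i\in S$, $n\in d\mathbb Z$, with log-canonical Poisson bracket determined by $\{a_i(n),a_i(n')\}=(\delta_{n',n+d_i}-\delta_{n',n-d_i})a_i(n)a_i(n')$; for $i<j$ with $d_i\le d_j$: $\{a_i(n),a_j(n')\}=(\delta_{n',n+B_{ij}}-\delta_{n',n})a_i(n)a_j(n')$; for $i<j$ with $d_i>d_j$: $\{a_i(n),a_j(n')\}=(\delta_{n',n+B_{ij}/2}-\delta_{n',n-B_{ij}/2})a_i(n)a_j(n')$; and all other pairs of generators Poisson commuting (brackets for $i>j$ given by antisymmetry). Then the field isomorphism $\beta:\mathbb C(\mathbf X)\to\mathbb C(a)$, $X^i_n\mapsto a_i(n)^{-1}$, is a Poisson map.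
   Context: Let $\mathfrak g$ be a finite-dimensional complex simple Lie algebra of rank $\ell$, $S=\{1,\dots,\ell\}$, of type $A_\ell$, $B_\ell$, $C_\ell$, $D_\ell$ ($\ell\ge4$), $E_{6,7,8}$, $F_4$ or $G_2$, with simple roots labelled: for $A_\ell,B_\ell,C_\ell$ the chain $1-2-\cdots-\ell$ ($\alpha_\ell$ short in $B_\ell$, long in $C_\ell$); $D_\ell$: chain $1-\cdots-(\ell-1)$ plus edge $(\ell-2)-\ell$; $E_\ell$: chain $1-2-3-5-\cdots-\ell$ plus edge $3-4$; $F_4$: chain $1-2-3-4$, $\alpha_1,\alpha_2$ long; $G_2$: $\alpha_2$ long. $d_i=(\alpha_i,\alpha_i)/2$ normalized: $d_i=1$ in types $A,D,E$; $(1,\dots,1,\frac12)$ for $B_\ell$; $(1,\dots,1,2)$ for $C_\ell$; $(1,1,\frac12,\frac12)$ for $F_4$; $(1,3)$ for $G_2$; $d=\min d_i$. $C_{ij}=2(\alpha_i,\alpha_j)/(\alpha_i,\alpha_i)$ and $B_{ij}=d_iC_{ij}$. Quiver $Q(\mathfrak g)$ on $\{v^i_n: i\in S, n\in d\mathbb Z\}$, arrows for all $n$: (simply-laced) orient Dynkin edges from larger to smaller label ($C(\mathfrak g)$); $v^i_n\to v^i_{n+1}$, and for each $i\to j$ in $C(\mathfrak g)$, $v^i_n\to v^j_n$ and $v^j_{n+1}\to v^i_n$. ($B_\ell$) $v^i_n\to v^i_{n+1}$ ($i\le\ell-1$); $v^i_n\to v^{i-1}_n$, $v^{i-1}_{n+1}\to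 v^i_n$ ($2\le i\le\ell-1$); $v^\ell_n\to v^\ell_{n+1/2}$, $v^\ell_n\to v^{\ell-1}_{n-1/2}$, $v^{\ell-1}_{n+1/2}\to v^\ell_n$. ($C_\ell$) $v^i_n\to v^i_{n+1}$ ($i\le\ell-1$); $v^i_n\to v^{i-1}_n$, $v^{i-1}_{n+1}\to v^i_n$ ($2\le i\le\ell-1$); $v^\ell_n\to v^\ell_{n+2}$, $v^\ell_n\to v^{\ell-1}_n$, $v^{\ell-1}_{n+2}\to v^\ell_n$. ($F_4$) $v^i_n\to v^i_{n+1}$ ($i=1,2$); $v^2_n\to v^1_n$, $v^1_{n+1}\to v^2_n$; $v^3_n\to v^3_{n+1/2}$, $v^3_n\to v^2_{n-1/2}$, $v^2_{n+1/2}\to v^3_n$; $v^4_n\to v^4_{n+1/2}$, $v^4_n\to v^3_n$, $v^3_{n+1/2}\to v^4_n$. ($G_2$) $v^1_n\to v^1_{n+1}$, $v^2_n\to v^2_{n+3}$, $v^2_n\to v^1_n$, $v^1_{n+3}\to v^2_n$. Exchange matrix $\varepsilon_{uv}=\#\{u\to v\}-\#\{v\to u\}$; $X^i_n$ is the $X$-variable at $v^i_n$. *)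

From HB Require Import structures.
From mathcomp Require Import all_boot all_order all_algebra.
From mathcomp Require Import reals Rstruct.
From mathcomp.real_closed Require Import complex.
From mathcomp Require Import mpoly.
From Stdlib Require Import Rdefinitions.

Set Implicit Arguments.
Unset Strict Implicit.
Unset Printing Implicit Defensive.

Import Order.TTheory GRing.Theory Num.Theory.
Local Open Scope ring_scope.

Definition CC : fieldType := complex Rdefinitions.R.

Inductive lie_type :=
| TA of nat | TB of nat | TC of nat | TD of nat
| TE6 | TE7 | TE8 | TF4 | TG2.

Definition rank (t : lie_type) : nat :=
  match t with
  | TA l | TB l | TC l | TD l => l
  | TE6 => 6 | TE7 => 7 | TE8 => 8 | TF4 => 4 | TG2 => 2
  end.

Definition valid_type (t : lie_type) : bool :=
  match t with
  | TA l => (1 <= l)%nat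
  | TB l | TC l => (2 <= l)%nat
  | TD l => (4 <= l)%nat
  | _ => true
  end.

Definition inS (t : lie_type) (i : nat) : bool := (1 <= i <= rank t)%nat.

Definition simply_laced (t : lie_type) : bool :=
  match t with TA _ | TD _ | TE6 | TE7 | TE8 => true | _ => false end.

(* d_i = (alpha_i, alpha_i)/2 *)
Definition dd (t : lie_type) (i : nat) : rat :=
  match t with
  | TB l => if i == l then 1 / 2 else 1
  | TC l => if i == l then 2 else 1
  | TF4 => if (i <= 2)%nat then 1 else 1 / 2
  | TG2 => if i == 2 then 3 else 1
  | _ => 1
  end.

Definition dmin (t : lie_type) : rat :=
  \big[Num.min/dd t 1]_(1 <= i < (rank t).+1) dd t i.

Definition adj1 (i j : nat) : bool := (i.+1 == j) || (j.+1 == i).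
Definition epair (a b i j : nat) : bool :=
  ((i == a) && (j == b)) || ((i == b) && (j == a)).

Definition dynkin_edge (t : lie_type) (i j : nat) : bool :=
  inS t i && inS t j &&
  match t with
  | TA _ | TB _ | TC _ | TF4 | TG2 => adj1 i j
  | TD l => (adj1 i j && (maxn i j <= l.-1)%nat) || epair (l - 2) l i j
  | TE6 | TE7 | TE8 =>
      [|| epair 1 2 i j, epair 2 3 i j, epair 3 4 i j, epair 3 5 i j
        | adj1 i j && (5 <= minn i j)%nat]
  end.

(* Cartan matrix C_ij = 2 (alpha_i, alpha_j) / (alpha_i, alpha_i); for an
   edge {i,j}, (alpha_i, alpha_j) = - max(d_i, d_j). *)
Definition cartanC (t : lie_type) (i j : nat) : rat :=
  if i == j then 2
  else if dynkin_edge t i j then - Num.max (dd t i) (dd t j) / dd t i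
  else 0.

Definition cartanB (t : lie_type) (i j : nat) : rat := dd t i * cartanC t i j.

Definition vertex := (nat * rat)%type.

Definition vertex_ok (t : lie_type) (u : vertex) : bool :=
  inS t u.1 && ((u.2 / dmin t) \is a Num.int).

(* number of arrows (i,n) -> (j,m) in Q(g), one boolean per arrow family *)
Definition arrow_rules (t : lie_type) (i : nat) (n : rat) (j : nat) (m : rat)
    : seq bool :=
  match t with
  | TA _ | TD _ | TE6 | TE7 | TE8 =>
      (* C(g): edges oriented from the larger to the smaller label *)
      [:: (i == j) && (m == n + 1);
          (* v^i_n -> v^j_n for i -> j, i.e. i > j *)
          dynkin_edge t i j && (j < i)%nat && (m == n);
          (* v^q_{n+1} -> v^p_n for p -> q, i.e. here q = i < p = j *)
          dynkin_edge t i j && (i < j)%nat && (n == m + 1)]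
  | TB l =>
      [:: (i == j) && (i <= l.-1)%nat && (m == n + 1);
          (2 <= i <= l.-1)%nat && (j == i.-1) && (m == n);
          (2 <= j <= l.-1)%nat && (i == j.-1) && (n == m + 1);
          (i == l) && (j == l) && (m == n + 1 / 2);
          (i == l) && (j == l.-1) && (m == n - 1 / 2);
          (i == l.-1) && (j == l) && (n == m + 1 / 2)]
  | TC l =>
      [:: (i == j) && (i <= l.-1)%nat && (m == n + 1);
          (2 <= i <= l.-1)%nat && (j == i.-1) && (m == n);
          (2 <= j <= l.-1)%nat && (i == j.-1) && (n == m + 1);
          (i == l) && (j == l) && (m == n + 2);
          (i == l) && (j == l.-1) && (m == n);
          (i == l.-1) && (j == l) && (n == m + 2)]
  | TF4 =>
      [:: (i == j) && (i <= 2)%nat && (m == n + 1);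
          (i == 2) && (j == 1) && (m == n);
          (i == 1) && (j == 2) && (n == m + 1);
          (i == 3) && (j == 3) && (m == n + 1 / 2);
          (i == 3) && (j == 2) && (m == n - 1 / 2);
          (i == 2) && (j == 3) && (n == m + 1 / 2);
          (i == 4) && (j == 4) && (m == n + 1 / 2);
          (i == 4) && (j == 3) && (m == n);
          (i == 3) && (j == 4) && (n == m + 1 / 2)]
  | TG2 =>
      [:: (i == 1) && (j == 1) && (m == n + 1);
          (i == 2) && (j == 2) && (m == n + 3);
          (i == 2) && (j == 1) && (m == n);
          (i == 1) && (j == 2) && (n == m + 3)]
  end.

Definition n_arrows (t : lie_type) (u v : vertex) : nat :=
  count id (arrow_rules t u.1 u.2 v.1 v.2).

Definition eps (t : lie_type) (u v : vertex) : int :=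
  (n_arrows t u v)%:Z - (n_arrows t v u)%:Z.

(* Log-canonical coefficients of the bracket on C(a):
   {a_i(n), a_j(n')} = abr (i,n) (j,n') a_i(n) a_j(n'). *)
Definition delta (b : bool) : int := (b : nat)%:Z.

Definition abr_lt (t : lie_type) (i : nat) (n : rat) (j : nat) (n' : rat)
    : int :=
  if dd t i <= dd t j then
    delta (n' == n + cartanB t i j) - delta (n' == n)
  else
    delta (n' == n + cartanB t i j / 2) - delta (n' == n - cartanB t i j / 2).

Definition abr (t : lie_type) (u v : vertex) : int :=
  let: (i, n) := u in let: (j, n') := v in
  if i == j then delta (n' == n + dd t i) - delta (n' == n - dd t i)
  else if (i < j)%nat then abr_lt t i n j n'
  else - abr_lt t j n' i n.

Definition poisson_bracket (K : fieldType) (iota : {rmorphism CC -> K})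
    (br : K -> K -> K) : Prop :=
  [/\ (forall f g, br f g = - br g f),
      (forall f g h, br f (g + h) = br f g + br f h),
      (forall c f g, br f (iota c * g) = iota c * br f g),
      (forall f g h, br f (g * h) = br f g * h + g * br f h)
    & (forall f g h, br f (br g h) + br g (br h f) + br h (br f g) = 0)].

Definition field_generated (K : fieldType) (iota : {rmorphism CC -> K})
    (P : vertex -> bool) (x : vertex -> K) : Prop :=
  forall Q : K -> Prop,
    (forall c, Q (iota c)) ->
    (forall u, P u -> Q (x u)) ->
    (forall f g, Q f -> Q g -> Q (f + g)) ->
    (forall f, Q f -> Q (- f)) ->
    (forall f g, Q f -> Q g -> Q (f * g)) ->
    (forall f, Q f -> Q f^-1) ->
    forall f, Q f.

Definition alg_independent (K : fieldType) (iota : {rmorphism CC -> K})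
    (P : vertex -> bool) (x : vertex -> K) : Prop :=
  forall (m : nat) (w : 'I_m -> vertex), injective w -> (forall k, P (w k)) ->
  forall p : {mpoly CC[m]}, mmap iota (fun k => x (w k)) p = 0 -> p = 0.

Definition log_canonical_ratfun_field (K : fieldType)
    (iota : {rmorphism CC -> K}) (P : vertex -> bool) (x : vertex -> K)
    (c : vertex -> vertex -> int) (br : K -> K -> K) : Prop :=
  [/\ field_generated iota P x, alg_independent iota P x,
      poisson_bracket iota br
    & forall u v, P u -> P v -> br (x u) (x v) = (c u v)%:~R * x u * x v].

(* A Poisson bracket on a field is determined by its values on field generators:
   it is additive and a derivation in each argument, kills the scalars, and
   satisfies {f, g^-1} = - g^-2 {f, g}.  So beta is Poisson as soon as it is
   Poisson on the generators X_u.  Inversion preserves log-canonical brackets,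
   {x^-1, y^-1} = c x^-1 y^-1 whenever {x, y} = c x y, hence on generators the
   claim reduces to eps_uv = abr_uv: the arrows of Q(g) between v^i_n and v^j_m
   must reproduce the bracket of a_i(n) and a_j(m), a finite check per type. *)

From Pilot Require Import Defs.
From HB Require Import structures.
From mathcomp Require Import all_boot all_order all_algebra.
From mathcomp Require Import reals Rstruct.
From mathcomp.real_closed Require Import complex.
From mathcomp Require Import mpoly.
From mathcomp Require Import ring lra zify.

Set Implicit Arguments.
Unset Strict Implicit.
Unset Printing Implicit Defensive.

Import Order.TTheory GRing.Theory Num.Theory.
Local Open Scope ring_scope.

Section PoissonBracket.

Variables (K : fieldType) (iota : {rmorphism CC -> K}) (br : K -> K -> K).
Hypothesis br_poisson : poisson_bracket iota br.

Lemma br_skew f g : br f g = - br g f.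
Proof. by case: br_poisson. Qed.

Lemma brDr f g h : br f (g + h) = br f g + br f h.
Proof. by case: br_poisson. Qed.

Lemma brMr f g h : br f (g * h) = br f g * h + g * br f h.
Proof. by case: br_poisson. Qed.

Lemma br0r f : br f 0 = 0.
Proof. by apply: (addrI (br f 0)); rewrite -brDr !addr0. Qed.

Lemma brNr f g : br f (- g) = - br f g.
Proof. by apply/eqP; rewrite -addr_eq0 -brDr addNr br0r. Qed.

Lemma br1r f : br f 1 = 0.
Proof.
have := brMr f 1 1; rewrite !mulr1 mul1r => br1.
by apply: (addrI (br f 1)); rewrite addr0 -br1.
Qed.

Lemma br_scalarr f c : br f (iota c) = 0.
Proof.
case: br_poisson => _ _ brZr _ _.
by rewrite -[iota c]mulr1 brZr br1r mulr0.
Qed.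

(* For [g = 0] both sides vanish, since [0^-1 = 0]. *)
Lemma brVr f g : br f g^-1 = - (g^-1 * g^-1) * br f g.
Proof.
have [->|g0] := eqVneq g 0; first by rewrite invr0 br0r mulr0.
have : br f (g * g^-1) = 0 by rewrite mulfV // br1r.
rewrite brMr addrC => /eqP; rewrite addr_eq0 => /eqP gbrV.
rewrite -[br f g^-1]mul1r -(mulVf g0) -mulrA gbrV; ring.
Qed.

Lemma br_log_canonicalV x y (c : int) :
  br x y = c%:~R * x * y -> br x^-1 y^-1 = c%:~R * x^-1 * y^-1.
Proof.
move=> brxy; rewrite brVr br_skew brVr br_skew brxy.
have cancel_sq (z : K) : z^-1 * z^-1 * z = z^-1.
  have [->|z0] := eqVneq z 0; first by rewrite invr0 !mul0r.
  by rewrite -mulrA mulVf // mulr1.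
rewrite -[in RHS](cancel_sq x) -[in RHS](cancel_sq y); ring.
Qed.

End PoissonBracket.

Section PoissonMorphism.

Variables (KX Ka : fieldType).
Variables (iX : {rmorphism CC -> KX}) (ia : {rmorphism CC -> Ka}).
Variables (brX : KX -> KX -> KX) (bra : Ka -> Ka -> Ka).
Hypothesis brX_poisson : poisson_bracket iX brX.
Hypothesis bra_poisson : poisson_bracket ia bra.
Variable beta : {rmorphism KX -> Ka}.
Hypothesis beta_scalar : forall c, beta (iX c) = ia c.
Variables (P : vertex -> bool) (x : vertex -> KX).
Hypothesis x_generates : field_generated iX P x.

Lemma poisson_morph_generatedr h :
    (forall v, P v -> beta (brX h (x v)) = bra (beta h) (beta (x v))) ->
  forall g, beta (brX h g) = bra (beta h) (beta g).
Proof.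
move=> brhx; apply: x_generates => //.
- move=> c.
  rewrite beta_scalar (br_scalarr brX_poisson).
  by rewrite (br_scalarr bra_poisson) rmorph0.
- move=> f g brf brg.
  by rewrite (brDr brX_poisson) !rmorphD brf brg (brDr bra_poisson).
- by move=> f brf; rewrite (brNr brX_poisson) !rmorphN brf (brNr bra_poisson).
- move=> f g brf brg.
  by rewrite (brMr brX_poisson) !rmorphD !rmorphM brf brg (brMr bra_poisson).
- move=> f brf.
  rewrite (brVr brX_poisson) rmorphM rmorphN rmorphM fmorphV brf.
  by rewrite (brVr bra_poisson).
Qed.

Lemma poisson_morph_generated :
    (forall u v, P u -> P v ->
       beta (brX (x u) (x v)) = bra (beta (x u)) (beta (x v))) ->
  forall f g, beta (brX f g) = bra (beta f) (beta g).
Proof.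
move=> brxx f; apply: poisson_morph_generatedr => v Pv.
rewrite (br_skew brX_poisson) rmorphN (br_skew bra_poisson (beta f)).
by congr (- _); apply: poisson_morph_generatedr => u Pu; apply: brxx.
Qed.

End PoissonMorphism.

Ltac is_rat x := let T := type of x in unify T rat.

Ltac rat_fact P :=
  match P with
  | @eq ?T _ _ => unify T rat
  | @eq ?T _ _ -> False => unify T rat
  | ~ @eq ?T _ _ => unify T rat
  | is_true (@Order.le _ _ ?x _) => is_rat x
  | is_true (@Order.lt _ _ ?x _) => is_rat x
  end.

Ltac clear_non_rat :=
  repeat match goal with H : ?P |- _ =>
    tryif rat_fact P then fail else clear H end.

Ltac nat_absurd := try (exfalso; lia).

Ltac rat_absurd :=
  try (exfalso; clear_non_rat; lra);
  try match goal with
  | H : ~ @eq ?T _ _ |- _ =>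
      unify T rat; exfalso; apply: H; clear_non_rat; lra
  | H : @eq ?T _ _ -> False |- _ =>
      unify T rat; exfalso; apply: H; clear_non_rat; lra
  end.

Ltac simpl_bool := cbv beta iota zeta delta [andb orb negb fst snd].

Ltac case_nat_tests :=
  repeat (rewrite ?eqxx; simpl_bool;
  match goal with
  | |- context [@eq_op _ ?x ?y] =>
      let T := type of x in unify T nat;
      case: (@eqP nat x y) => ?; try subst; nat_absurd
  | |- context [(?x <= ?y)%N] => case: (leqP x y) => ?; nat_absurd
  end).

Ltac case_rat_order :=
  repeat (simpl_bool;
  match goal with
  | |- context [@Order.lt _ _ ?x ?y] => is_rat x; case: (ltP x y) => ?; rat_absurd
  | |- context [@Order.le _ _ ?x ?y] => is_rat x; case: (leP x y) => ?; rat_absurd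
  end).

Ltac case_rat_tests :=
  repeat (rewrite ?eqxx; simpl_bool;
  match goal with
  | |- context [@eq_op _ ?x ?y] =>
      is_rat x;
      first [ rewrite (_ : (x == y) = true);
              last (by apply/eqP; clear_non_rat; lra)
            | rewrite (_ : (x == y) = false);
              last (by apply/negbTE/eqP => ?; clear_non_rat; lra)
            | case: (@eqP _ x y) => ?; [subst; rat_absurd|] ]
  end).

(* Both sides are finite tables of tests on the labels, decided by [lia], and on
   the positions in [Q], decided by [lra]. *)
Ltac check_arrow_table :=
  move=> i j n m; rewrite /inS /= => /andP[? ?] /andP[? ?];
  cbv beta iota zeta delta [eps n_arrows arrow_rules abr abr_lt cartanB cartanC
    dd dynkin_edge inS rank Defs.adj1 Defs.epair Order.max fst snd andb orb negb];
  case_nat_tests; clear_non_rat; case_rat_order; case_rat_tests; done.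

Definition eps_abr_agree (t : lie_type) : Prop :=
  forall i j n m, inS t i -> inS t j -> eps t (i, n) (j, m) = abr t (i, n) (j, m).

Lemma eps_abr_agree_A l : eps_abr_agree (TA l). Proof. check_arrow_table. Qed.
Lemma eps_abr_agree_B l : eps_abr_agree (TB l). Proof. check_arrow_table. Qed.
Lemma eps_abr_agree_C l : eps_abr_agree (TC l). Proof. check_arrow_table. Qed.
Lemma eps_abr_agree_D l : eps_abr_agree (TD l). Proof. check_arrow_table. Qed.
Lemma eps_abr_agree_E6 : eps_abr_agree TE6. Proof. check_arrow_table. Qed.
Lemma eps_abr_agree_E7 : eps_abr_agree TE7. Proof. check_arrow_table. Qed.
Lemma eps_abr_agree_E8 : eps_abr_agree TE8. Proof. check_arrow_table. Qed.
Lemma eps_abr_agree_F4 : eps_abr_agree TF4. Proof. check_arrow_table. Qed.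
Lemma eps_abr_agree_G2 : eps_abr_agree TG2. Proof. check_arrow_table. Qed.

Lemma eps_eq_abr t u v : vertex_ok t u -> vertex_ok t v -> eps t u v = abr t u v.
Proof.
case: u v => i n [j m] /andP[Si _] /andP[Sj _]; move: i j n m Si Sj.
case: t => [l|l|l|l| | | | |].
- exact: eps_abr_agree_A.
- exact: eps_abr_agree_B.
- exact: eps_abr_agree_C.
- exact: eps_abr_agree_D.
- exact: eps_abr_agree_E6.
- exact: eps_abr_agree_E7.
- exact: eps_abr_agree_E8.
- exact: eps_abr_agree_F4.
- exact: eps_abr_agree_G2.
Qed.

Theorem proposition4p11 (t : lie_type) (Ht : valid_type t)
    (KX : fieldType) (iX : {rmorphism CC -> KX}) (X : vertex -> KX)
    (brX : KX -> KX -> KX)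
    (HX : log_canonical_ratfun_field iX (vertex_ok t) X (eps t) brX)
    (Ka : fieldType) (ia : {rmorphism CC -> Ka}) (a : vertex -> Ka)
    (bra : Ka -> Ka -> Ka)
    (Ha : log_canonical_ratfun_field ia (vertex_ok t) a (abr t) bra)
    (beta : {rmorphism KX -> Ka}) (Hbij : bijective beta)
    (HbC : forall c, beta (iX c) = ia c)
    (HbX : forall u, vertex_ok t u -> beta (X u) = (a u)^-1) :
  forall f g : KX, beta (brX f g) = bra (beta f) (beta g).
Proof.
case: HX => X_generates _ brX_poisson brX_log.
case: Ha => _ _ bra_poisson bra_log.
apply: (poisson_morph_generated brX_poisson bra_poisson HbC X_generates).
move=> u v Hu Hv.
rewrite brX_log // !rmorphM rmorph_int !HbX // (eps_eq_abr Hu Hv).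
by rewrite (br_log_canonicalV bra_poisson (bra_log _ _ Hu Hv)).
Qed.
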